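(* Let $G$ be a simple graph with edge ideal $I(G)\subseteq R=\Bbbk[x_1,\ldots,x_N]$. Let $e_1,\ldots,e_s$ be distinct edges of $G$, let $a_1,\ldots,a_s>0$ be integers, and set $t-1=a_1+\cdots+a_s$ and $x^{\mathbf e}=e_1^{a_1}\cdots e_s^{a_s}$, where each edge $e_i=\{p,q\}$ is identified with the monomial $x_px_q$. Assume that $I(G)^t:x^{\mathbf e}$ is a squarefree monomial ideal. Then $$I(G)^t:x^{\mathbf e}=I(G)^{s+1}:(e_1\cdots e_s)=\left(I(G)^2:e_1\right)^s:(e_2\cdots e_s).$$
   Context: The edge ideal of a simple graph $G$ on $[N]$ is $I(G)=(x_ix_j\mid\{i,j\}\in E(G))$. *)

From HB Require Import structures.
From mathcomp Require Import all_boot all_order all_algebra.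
From mathcomp Require Import mpoly.
Set Implicit Arguments. Unset Strict Implicit. Unset Printing Implicit Defensive.
Import GRing.Theory.
Local Open Scope ring_scope.

Section Ideals.
Variables (N : nat) (k : fieldType).
Local Notation R := {mpoly k[N]}.

Definition ideal_gen (S : R -> Prop) : R -> Prop :=
  fun p => exists n (c g : 'I_n -> R),
    (forall i, S (g i)) /\ p = \sum_(i < n) c i * g i.

Definition ideal_eq (I J : R -> Prop) : Prop := forall p, I p <-> J p.

Definition ideal_mul (I J : R -> Prop) : R -> Prop :=
  ideal_gen (fun p => exists a b, I a /\ J b /\ p = a * b).

Definition ideal_pow (I : R -> Prop) (n : nat) : R -> Prop :=
  iter n (ideal_mul I) (ideal_gen (fun p => p = 1)).

Definition ideal_colon (I : R -> Prop) (f : R) : R -> Prop :=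
  fun p => I (p * f).

Definition squarefree_monomial (p : R) : Prop :=
  exists m : 'X_{1..N}, p = 'X_[m] /\ forall i, (m i <= 1)%N.

Definition squarefree_monomial_ideal (I : R -> Prop) : Prop :=
  exists S : R -> Prop, (forall p, S p -> squarefree_monomial p) /\
    ideal_eq I (ideal_gen S).

Definition simple_graph (G : rel 'I_N) : Prop :=
  ssrbool.symmetric G /\ irreflexive G.

Definition edge_mon (e : 'I_N * 'I_N) : R := 'X_e.1 * 'X_e.2.

Definition edge_ideal (G : rel 'I_N) : R -> Prop :=
  ideal_gen (fun p => exists i j, G i j /\ p = 'X_i * 'X_j).

End Ideals.

(* Monomial ideals are handled through exponent vectors: a polynomial lies
   in the monomial ideal generated by a set S of exponents iff every exponent
   of its support lies above an element of S, and the colon by x^f shifts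
   exponents by f.  The three colon ideals thus become upward-closed sets of
   exponents, and all three are generated by the monomials x_u x_v with u and
   v even-connected with respect to e_1, ..., e_s (Banerjee).  Such an
   x_u x_v times e_1 ... e_s is a product of s + 1 edges; conversely, if a
   product of n + 1 edges divides w times n of the e_i, peeling off its edges
   one vertex at a time yields an even-connected pair dividing w.  The
   peeling needs that no vertex is even-connected to itself, which is where
   squarefreeness enters: such a vertex y would put x_y^2, hence x_y, into
   I^t : x^e, whose monomials all have degree at least 2. *)

From HB Require Import structures.
From mathcomp Require Import all_boot all_order all_algebra.
From mathcomp Require Import mpoly.
From mathcomp Require Import zify.
Set Implicit Arguments. Unset Strict Implicit. Unset Printing Implicit Defensive.
Import GRing.Theory.
Local Open Scope ring_scope.

Section IdealGen.
Variables (N : nat) (k : fieldType).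
Local Notation R := {mpoly k[N]}.
Implicit Types (S T : R -> Prop) (p q : R).

Lemma ideal_gen_in S p : S p -> ideal_gen S p.
Proof.
by move=> Sp; exists 1%N, (fun=> 1), (fun=> p); rewrite big_ord1 mul1r.
Qed.

Lemma ideal_gen0 S : ideal_gen S 0.
Proof. by exists 0%N, (fun=> 0), (fun=> 0); split=> [[]|]; rewrite ?big_ord0. Qed.

Lemma ideal_genD S p q : ideal_gen S p -> ideal_gen S q -> ideal_gen S (p + q).
Proof.
move=> [n1 [c1 [g1 [Sg1 ->]]]] [n2 [c2 [g2 [Sg2 ->]]]].
pose glue (A : Type) (f1 : 'I_n1 -> A) (f2 : 'I_n2 -> A) i :=
  match split i with inl j => f1 j | inr j => f2 j end.
exists (n1 + n2)%N, (glue _ c1 c2), (glue _ g1 g2); split.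
  by move=> i; rewrite /glue; case: (split i).
rewrite big_split_ord /glue; congr (_ + _); apply: eq_bigr => i _.
  by have /= -> := unsplitK (inl 'I_n2 i).
by have /= -> := unsplitK (inr 'I_n1 i).
Qed.

Lemma ideal_genMl S c p : ideal_gen S p -> ideal_gen S (c * p).
Proof.
move=> [n [c' [g [Sg ->]]]]; exists n, (fun i => c * c' i), g; split=> //.
by rewrite mulr_sumr; apply: eq_bigr => i _; rewrite mulrA.
Qed.

Lemma ideal_gen_sum S (I : Type) (r : seq I) (F : I -> R) :
  (forall i, ideal_gen S (F i)) -> ideal_gen S (\sum_(i <- r) F i).
Proof.
move=> SF; elim: r => [|x r IHr]; first by rewrite big_nil; apply: ideal_gen0.
by rewrite big_cons; apply: ideal_genD.
Qed.

Lemma ideal_gen_min S T :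
  (forall p, S p -> ideal_gen T p) -> forall p, ideal_gen S p -> ideal_gen T p.
Proof.
move=> ST p [n [c [g [Sg ->]]]]; apply: ideal_gen_sum => i.
by apply: ideal_genMl; apply: ST.
Qed.

Lemma eq_ideal_gen S T :
  (forall p, S p <-> T p) -> ideal_eq (ideal_gen S) (ideal_gen T).
Proof.
by move=> ST p; split; apply: ideal_gen_min => q /ST; apply: ideal_gen_in.
Qed.

Lemma ideal_eq_sym (I J : R -> Prop) : ideal_eq I J -> ideal_eq J I.
Proof. by move=> IJ p; split=> /IJ. Qed.

Lemma ideal_eq_trans (I J K : R -> Prop) :
  ideal_eq I J -> ideal_eq J K -> ideal_eq I K.
Proof. by move=> IJ JK p; split=> [/IJ/JK|/JK/IJ]. Qed.

Lemma eq_ideal_mul (I I' J J' : R -> Prop) :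
  ideal_eq I I' -> ideal_eq J J' -> ideal_eq (ideal_mul I J) (ideal_mul I' J').
Proof.
move=> II' JJ'; apply: eq_ideal_gen => p.
by split=> -[a [b [Ia [Jb ->]]]]; exists a, b; rewrite (II' a) (JJ' b) in Ia Jb *.
Qed.

Lemma eq_ideal_pow (I J : R -> Prop) n :
  ideal_eq I J -> ideal_eq (ideal_pow I n) (ideal_pow J n).
Proof.
by move=> IJ; elim: n => [|n IHn] //=; apply: eq_ideal_mul.
Qed.

Lemma eq_ideal_colon (I J : R -> Prop) f :
  ideal_eq I J -> ideal_eq (ideal_colon I f) (ideal_colon J f).
Proof. by move=> IJ p; apply: IJ. Qed.

End IdealGen.

Section MonomialIdeals.
Variables (N : nat) (k : fieldType).
Local Notation R := {mpoly k[N]}.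
Local Notation mon := 'X_{1..N}.
Implicit Types (S T Q : mon -> Prop) (m f : mon) (p : R).

Definition monomial_ideal S : R -> Prop :=
  ideal_gen (fun p => exists2 m, S m & p = 'X_[m]).

Definition supported_in Q : R -> Prop := fun p => forall m, m \in msupp p -> Q m.

Definition upclosure S m : Prop := exists2 n, S n & (n <= m)%MM.

Definition msum S T m : Prop := exists a b, [/\ S a, T b & m = (a + b)%MM].

Definition mpow S n : mon -> Prop := iter n (msum S) (fun m => m = 0%MM).

Lemma monomial_idealE S :
  ideal_eq (monomial_ideal S) (supported_in (upclosure S)).
Proof.
move=> p; split.
  move=> [n [c [g [Sg ->]]]] m; rewrite mcoeff_msupp raddf_sum /=.
  have [i|] := pickP (fun i => (c i * g i)@_m != 0); last first.
    by move=> c0; rewrite big1 ?eqxx // => i _; apply/eqP/negbFE; rewrite c0.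
  have [n0 Sn0 ->] := Sg i; rewrite -mcoeff_msupp (perm_mem (msuppMX _ _)).
  by case/mapP=> m' _ -> _; exists n0; rewrite ?lem_addr.
move=> Sp; rewrite [p]mpolyE; apply: ideal_gen_sum => m.
have [/Sp [n Sn le_nm]|/memN_msupp_eq0 ->] := boolP (m \in msupp p); last first.
  by rewrite scale0r; apply: ideal_gen0.
rewrite -(submK le_nm) mpolyXD -mul_mpolyC mulrA; apply: ideal_genMl.
by apply: ideal_gen_in; exists n.
Qed.

Lemma supported_inX Q m : supported_in Q 'X_[m] <-> Q m.
Proof.
split=> [|Qm m']; first by apply; rewrite msuppX mem_seq1.
by rewrite msuppX mem_seq1 => /eqP ->.
Qed.

Lemma eq_supported_in Q Q' :
  (forall m, Q m <-> Q' m) -> ideal_eq (supported_in Q) (supported_in Q').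
Proof. by move=> QQ' p; split=> Qp m /Qp /QQ'. Qed.

Lemma supported_in_colonX Q f :
  ideal_eq (ideal_colon (supported_in Q) 'X_[f])
           (supported_in (fun m => Q (m + f)%MM)).
Proof.
move=> p; split=> Qp m.
  by move=> supp_m; rewrite addmC; apply: Qp; rewrite (perm_mem (msuppMX p f)) map_f.
rewrite (perm_mem (msuppMX p f)) => /mapP [m' supp_m' ->].
by rewrite addmC; apply: Qp.
Qed.

Lemma upclosed_monomial_idealE Q :
  (forall m m', Q m -> (m <= m')%MM -> Q m') ->
  ideal_eq (supported_in Q) (monomial_ideal Q).
Proof.
move=> Q_up; apply: ideal_eq_trans (ideal_eq_sym (monomial_idealE Q)).
apply: eq_supported_in => m; split=> [Qm|[n Qn /(Q_up _ _ Qn)//]].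
by exists m; rewrite ?lepm_refl.
Qed.

Lemma monomial_ideal_mul S T :
  ideal_eq (ideal_mul (monomial_ideal S) (monomial_ideal T))
           (monomial_ideal (msum S T)).
Proof.
move=> p; split; apply: ideal_gen_min.
  move=> _ [_ [_ [[n1 [c1 [g1 [Sg1 ->]]]] [[n2 [c2 [g2 [Tg2 ->]]]] ->]]]].
  rewrite mulr_suml; apply: ideal_gen_sum => i; rewrite -mulrA.
  rewrite mulr_sumr; apply: ideal_genMl; apply: ideal_gen_sum => j.
  rewrite mulrCA; apply: ideal_genMl.
  have [m1 Sm1 ->] := Sg1 i; have [m2 Tm2 ->] := Tg2 j.
  by apply: ideal_gen_in; exists (m1 + m2)%MM; rewrite ?mpolyXD //; exists m1, m2.
move=> _ [_ [a [b [Sa Tb ->]]] ->]; apply: ideal_gen_in.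
exists 'X_[a], 'X_[b]; rewrite mpolyXD.
by split; [|split=> //]; apply: ideal_gen_in; [exists a | exists b].
Qed.

Lemma monomial_ideal_pow S n :
  ideal_eq (ideal_pow (monomial_ideal S) n) (monomial_ideal (mpow S n)).
Proof.
elim: n => [|n IHn] /=.
  apply: eq_ideal_gen => p; split=> [->|[_ -> ->]]; last by rewrite mpolyX0.
  by exists 0%MM; rewrite ?mpolyX0.
exact: ideal_eq_trans (eq_ideal_mul _ IHn) (monomial_ideal_mul _ _).
Qed.

Lemma squarefree_monomial_ideal_below (I : R -> Prop) Q :
  ideal_eq I (supported_in Q) -> squarefree_monomial_ideal I ->
  forall m, Q m -> exists q : mon, [/\ forall i, (q i <= 1)%N, (q <= m)%MM & Q q].
Proof.
move=> IQ [S [S_sqf IS]] m Qm.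
pose Sq q := S 'X_[q] /\ forall i, (q i <= 1)%N.
have : monomial_ideal Sq 'X_[m].
  move/IQ/IS: (proj2 (supported_inX Q m) Qm); apply: ideal_gen_min => p Sp.
  have [q [Eq sqf_q]] := S_sqf p Sp; rewrite Eq in Sp *.
  by apply: ideal_gen_in; exists q.
move/monomial_idealE/(_ m); rewrite msuppX mem_seq1 eqxx => -[//|q [Sq_q sqf_q] le_qm].
exists q; split=> //; apply/(supported_inX Q)/IQ/IS.
exact: ideal_gen_in.
Qed.

End MonomialIdeals.

Lemma mnm_ltn_of_mdeg_ltn n (m1 m2 : 'X_{1..n}) :
  (mdeg m1 < mdeg m2)%N -> exists i, (m1 i < m2 i)%N.
Proof.
move=> lt_deg; apply/existsP; apply: contraLR lt_deg; rewrite negb_exists -leqNgt.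
by move=> /forallP le21; rewrite !mdegE leq_sum // => i _; rewrite leqNgt le21.
Qed.

Lemma sum_nseq_mnm n (I : Type) (F : I -> 'X_{1..n}) k i :
  (\sum_(j <- nseq k i) F j = F i *+ k)%MM.
Proof. by rewrite big_nseq -Monoid.iteropE. Qed.

Lemma sum_mulmn_as_seq n (I : Type) (F : I -> 'X_{1..n}) (a : I -> nat) (r : seq I) :
  exists r' : seq I, size r' = (\sum_(i <- r) a i)%N /\
    (\sum_(j <- r') F j = \sum_(i <- r) F i *+ a i)%MM.
Proof.
elim: r => [|i r [r' [size_r' Er']]]; first by exists [::]; rewrite !big_nil.
exists (nseq (a i) i ++ r'); rewrite size_cat size_nseq size_r' !big_cons.
by rewrite big_cat sum_nseq_mnm Er'.
Qed.

Section EdgeProducts.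
Variables (N : nat) (G : rel 'I_N).
Hypothesis G_sym : ssrbool.symmetric G.
Local Notation mon := 'X_{1..N}.
Local Open Scope multi_scope.
Implicit Types (x y z : 'I_N) (b c w : mon).

Definition edge_exp x y : mon := U_(x) + U_(y).

Definition edge_exps m : Prop := exists x y, G x y /\ m = edge_exp x y.

Definition edge_prod n : mon -> Prop := mpow edge_exps n.

Lemma edge_prod0 b : edge_prod 0 b -> b = 0.
Proof. by []. Qed.

Lemma edge_prod1 x y : G x y -> edge_prod 1 (edge_exp x y).
Proof. by exists (edge_exp x y), 0; split; [exists x, y | | rewrite addm0]. Qed.

Lemma edge_prodD n1 n2 b1 b2 :
  edge_prod n1 b1 -> edge_prod n2 b2 -> edge_prod (n1 + n2)%N (b1 + b2).
Proof.
elim: n1 b1 => [|n1 IHn1] b1 /=; first by move=> -> prod_b2; rewrite add0m.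
move=> [c [b1' [Ec prod_b1' ->]]] prod_b2.
by exists c, (b1' + b2); split=> //; [apply: IHn1 | rewrite addmA].
Qed.

Lemma edge_prod_sum (I : Type) (r : seq I) (f : I -> nat) (F : I -> mon) :
  (forall i, edge_prod (f i) (F i)) ->
  edge_prod (\sum_(i <- r) f i)%N (\sum_(i <- r) F i).
Proof.
move=> prod_F; elim: r => [|i r IHr]; first by rewrite !big_nil.
by rewrite !big_cons; apply: edge_prodD.
Qed.

Lemma edge_prodMn b n : edge_prod 1 b -> edge_prod n (b *+ n).
Proof.
move=> prod_b; elim: n => [|n IHn]; first by rewrite mulm0n.
by rewrite mulmS; apply: (edge_prodD (n1 := 1)).
Qed.

Lemma mdeg_edge_prod n b : edge_prod n b -> mdeg b = (2 * n)%N.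
Proof.
elim: n b => [|n IHn] b /=; first by move=> ->; rewrite mdeg0.
move=> [_ [c [[x [y [_ ->]]] /IHn deg_c ->]]].
by rewrite !mdegD !mdeg1 deg_c mulnS.
Qed.

Lemma edge_prod_at n b z : edge_prod n.+1 b -> (0 < b z)%N ->
  exists y c, [/\ G z y, edge_prod n c & b = edge_exp z y + c].
Proof.
elim: n b => [|n IHn] b [_ [c [[x [y [Gxy ->]]] prod_c ->]]];
  rewrite !mnmDE !mnm1E.
all: have [<- _|_] := eqVneq x z; first by exists y, c.
all: have [<- _|_ /=] := eqVneq y z;
  first by exists x, c; rewrite G_sym /edge_exp [U_(y) + _]addmC.
  by rewrite (edge_prod0 prod_c) mnm0E.
move=> /(IHn _ prod_c) [y' [c' [Gzy' prod_c' ->]]].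
exists y', (edge_exp x y + c'); split=> //.
  by exists (edge_exp x y), c'; split=> //; exists x, y.
by rewrite addmA [edge_exp x y + _]addmC addmA.
Qed.

Lemma edge_prod_drop n b w z : edge_prod n.+1 b -> b <= w + U_(z) ->
  exists2 c, edge_prod n c & c <= w.
Proof.
move=> prod_b /mnm_lepP le_b.
have [b_z0|b_z_gt0] := posnP (b z).
  move: prod_b b_z0 le_b => [d [c [_ prod_c ->]]] bz0 le_b.
  exists c => //; apply/mnm_lepP => x; move: (le_b x) bz0.
  rewrite !mnmDE mnm1E; case: eqVneq => [<-|_]; lia.
have [y [c [_ prod_c Eb]]] := edge_prod_at prod_b b_z_gt0.
exists c => //; apply/mnm_lepP => x; move: (le_b x).
by rewrite Eb !mnmDE !mnm1E; case: eqVneq; lia.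
Qed.

End EdgeProducts.

Section EvenConnections.
Variables (N : nat) (G : rel 'I_N) (s : nat) (e : 'I_s -> 'I_N * 'I_N).
Hypotheses (G_sym : ssrbool.symmetric G) (G_irr : irreflexive G).
Hypothesis G_e : forall i, G (e i).1 (e i).2.
Local Notation mon := 'X_{1..N}.
Local Notation edge_prod := (edge_prod G).
Local Open Scope multi_scope.
Implicit Types (i : 'I_s) (D : {set 'I_s}) (x y z u v : 'I_N) (b w : mon).

Definition edge_end i (c : bool) := if c then (e i).1 else (e i).2.

Definition eexp i := edge_exp (e i).1 (e i).2.

Lemma eexpE i c : eexp i = edge_exp (edge_end i c) (edge_end i (~~ c)).
Proof. by case: c; rewrite /eexp /edge_exp // addmC. Qed.

Lemma edge_prod_eexp i : edge_prod 1 (eexp i).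
Proof. exact: edge_prod1. Qed.

(* [even_conn D u v]: there is a walk u, p_1, q_1, ..., p_r, q_r, v whose
   steps {u, p_1}, {q_j, p_(j+1)}, {q_r, v} are edges of G while the steps
   {p_j, q_j} run through the edges e_i, i in D, each exactly once. *)
Inductive even_conn : {set 'I_s} -> 'I_N -> 'I_N -> Prop :=
| even_conn_edge u v : G u v -> even_conn set0 u v
| even_conn_cons u i c D v : G u (edge_end i c) -> i \notin D ->
    even_conn D (edge_end i (~~ c)) v -> even_conn (i |: D) u v.

Lemma even_conn_rcons D u i c v : even_conn D u (edge_end i c) ->
  i \notin D -> G (edge_end i (~~ c)) v -> even_conn (i |: D) u v.
Proof.
move Ex: (edge_end i c) => x conn; elim: conn Ex => {D u x}.
  move=> u x Gux Ex _ Gv; rewrite -Ex in Gux.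
  by apply: even_conn_cons Gux _ (even_conn_edge Gv); rewrite inE.
move=> u j c' D x Gu jD _ IH Ex iD Gv.
have ij : i != j by apply: contraNneq iD => ->; rewrite setU11.
rewrite setUCA; apply: even_conn_cons Gu _ (IH Ex _ Gv).
  by rewrite !inE negb_or eq_sym ij.
by apply: contra iD => iD; rewrite setU1r.
Qed.

Lemma even_conn_sym D u v : even_conn D u v -> even_conn D v u.
Proof.
elim=> {D u v} [u v Guv|u i c D v Gu iD _ IH].
  by apply: even_conn_edge; rewrite G_sym.
by apply: even_conn_rcons IH iD _; rewrite negbK G_sym.
Qed.

Lemma even_conn_split D u v i : even_conn D u v -> i \in D ->
  exists c D1 D2, [/\ D1 \subset D, even_conn D1 u (edge_end i c),
                     i \notin D2 & even_conn D2 (edge_end i (~~ c)) v].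
Proof.
elim=> {D u v} [u v _|u j c D v Gu jD conn_v IH]; first by rewrite inE.
have [-> _|ij] := eqVneq i j.
  by exists c, set0, D; split; rewrite ?sub0set //; apply: even_conn_edge.
rewrite !inE (negbTE ij) => /IH [c' [D1 [D2 [sD1 conn1 iD2 conn2]]]].
exists c', (j |: D1), D2; split=> //; first exact: setUS.
by apply: even_conn_cons Gu _ conn1; apply: contra jD => /(subsetP sD1).
Qed.

Lemma even_conn_edge_prod D u v : even_conn D u v ->
  edge_prod #|D|.+1 (U_(u) + U_(v) + \sum_(i in D) eexp i).
Proof.
elim=> {D u v} [u v Guv|u i c D v Gu iD _ IH].
  by rewrite cards0 big_set0 addm0; apply: edge_prod1.
rewrite cardsU1 big_setU1 // iD (eexpE i c).
have -> : U_(u) + U_(v)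
          + (edge_exp (edge_end i c) (edge_end i (~~ c)) + \sum_(j in D) eexp j)
    = edge_exp u (edge_end i c)
      + (U_(edge_end i (~~ c)) + U_(v) + \sum_(j in D) eexp j).
  by apply/mnmP => x; rewrite /edge_exp !mnmDE; lia.
exact: (edge_prodD (n1 := 1)) (edge_prod1 Gu) IH.
Qed.

Definition even_pair w : Prop :=
  exists u v D, U_(u) + U_(v) <= w /\ even_conn D u v.

Lemma even_pair_colon w :
  even_pair w -> upclosure (edge_prod s.+1) (w + \sum_(i < s) eexp i).
Proof.
move=> [u [v [D [/mnm_lepP le_uv conn]]]].
have prod_compl : edge_prod #|~: D| (\sum_(i in ~: D) eexp i).
  by rewrite -big_enum cardE -sum1_size; apply: edge_prod_sum => i; apply: edge_prod_eexp.
exists (U_(u) + U_(v) + \sum_(i in D) eexp i + \sum_(i in ~: D) eexp i).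
  have := edge_prodD (even_conn_edge_prod conn) prod_compl.
  by rewrite addSn cardsC card_ord.
have -> : \sum_(i < s) eexp i = \sum_(i in D) eexp i + \sum_(i in ~: D) eexp i.
  by rewrite (bigID (mem D)); congr (_ + _); apply: eq_bigl => i; rewrite !inE.
by apply/mnm_lepP => x; move: (le_uv x); rewrite !mnmDE; lia.
Qed.

Lemma edge_end_of_sum_gt0 (r : seq 'I_s) x : (0 < (\sum_(i <- r) eexp i)%MM x)%N ->
  exists i c, i \in r /\ x = edge_end i c.
Proof.
rewrite mnm_sumE lt0n sum_nat_seq_neq0 => /hasP [i ir /=].
rewrite /eexp /edge_exp mnmDE !mnm1E.
have [<- _|_] := eqVneq (e i).1 x; first by exists i, true.
by have [<- _|//] := eqVneq (e i).2 x; exists i, false.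
Qed.

Section NoClosedEvenConn.
Hypothesis no_closed_even_conn : forall D y, ~ even_conn D y y.

Lemma even_conn_extend z i c D v : G z (edge_end i c) ->
  even_conn D (edge_end i (~~ c)) v -> exists D', even_conn D' z v.
Proof.
move=> Gz conn; have [iD|iD] := boolP (i \in D); last first.
  by exists (i |: D); apply: even_conn_cons Gz iD conn.
have [c' [D1 [D2 [_ conn1 iD2 conn2]]]] := even_conn_split conn iD.
have [Ec'|nc'] := eqVneq c' c.
  by exists (i |: D2); rewrite Ec' in conn2; apply: even_conn_cons Gz iD2 conn2.
have Ec' : c' = ~~ c by move: nc'; case: (c); case: (c').
by rewrite Ec' in conn1; case: (no_closed_even_conn conn1).
Qed.

Lemma even_pair_exchange z i c w : G z (edge_end i c) ->
  even_pair (w + U_(edge_end i (~~ c))) -> even_pair (U_(z) + w).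
Proof.
set p := edge_end i (~~ c) => Gz [u [v [D [/mnm_lepP le_uv conn]]]].
have [Eu|up] := eqVneq u p.
  rewrite Eu in conn le_uv; have [D' conn'] := even_conn_extend Gz conn.
  exists z, v, D'; split=> //; apply/mnm_lepP => y.
  by move: (le_uv y); rewrite !mnmDE; lia.
have [Ev|vp] := eqVneq v p.
  rewrite Ev in conn le_uv; have [D' conn'] := even_conn_extend Gz (even_conn_sym conn).
  exists z, u, D'; split=> //; apply/mnm_lepP => y.
  by move: (le_uv y); rewrite !mnmDE; lia.
exists u, v, D; split=> //; apply/mnm_lepP => y; move: (le_uv y).
rewrite !mnmDE !mnm1E; have [<-|_] := eqVneq p y; last lia.
by rewrite (negbTE up) (negbTE vp); lia.
Qed.

(* Let x^b, a product of n + 1 edges, divide x^w times the e_i, i in r.  By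
   degree, at some vertex z the e_i do not account for all of b, so x_z
   divides x^w; let {z, p} be an edge of b at z.  If p is no end of an e_i,
   {z, p} is the pair.  Otherwise p is an end of some e_i with i in r, and
   induction on the remaining n edges, with x_z traded for the other end of
   e_i, gives a pair that even_pair_exchange moves back. *)
Lemma even_pair_of_edge_prod (r : seq 'I_s) w b :
  edge_prod (size r).+1 b -> b <= w + \sum_(i <- r) eexp i -> even_pair w.
Proof.
move Er: (size r) => n; elim: n r w b Er => [|n IHn] r w b.
  case: r => // _ [c [b' [[u [v [Guv ->]]] -> ->]]].
  rewrite big_nil !addm0 => le_uv.
  by exists u, v, set0; split=> //; apply: even_conn_edge.
set S := \sum_(i <- r) eexp i => size_r prod_b /mnm_lepP le_b.
have [z lt_z] : exists z, (S z < b z)%N.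
  apply: mnm_ltn_of_mdeg_ltn; rewrite (mdeg_edge_prod prod_b) mdeg_sum.
  have -> : (\sum_(i <- r) mdeg (eexp i) = 2 * size r)%N.
    by rewrite -sum1_size big_distrr; apply: eq_bigr => i _; rewrite mdegD !mdeg1.
  by rewrite size_r; lia.
have w_z : (0 < w z)%N by move: (le_b z); rewrite mnmDE; lia.
have [p [b' [Gzp prod_b' Eb]]] :=
  edge_prod_at G_sym prod_b (leq_ltn_trans (leq0n _) lt_z).
have zp : z != p by apply: contraTneq Gzp => <-; rewrite G_irr.
have [S_p0|/edge_end_of_sum_gt0 [i [c [ir Ep]]]] := posnP (S p).
  exists z, p, set0; split; last exact: even_conn_edge.
  apply/mnm_lepP => x; move: (le_b x) (le_b p).
  rewrite Eb !mnmDE !mnm1E S_p0 eqxx (negbTE zp).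
  have [<-|zx] := eqVneq z x; first by rewrite eq_sym (negbTE zp); lia.
  by have [<-|px] := eqVneq p x; rewrite ?(negbTE zx) ?(negbTE px); lia.
have ES : S = eexp i + \sum_(j <- rem i r) eexp j.
  by rewrite /S (perm_big _ (perm_to_rem ir)) big_cons.
have le_zw : U_(z) <= w by rewrite lep1mP -lt0n.
rewrite -(submK le_zw) addmC; apply: (even_pair_exchange (i := i) (c := c)).
  by rewrite -Ep.
apply: (IHn (rem i r) _ b'); rewrite ?size_rem ?size_r //.
apply/mnm_lepP => x; move: (le_b x).
rewrite Eb ES (eexpE i c) -Ep /edge_exp !mnmDE mnmBE !mnm1E.
by have [<-|_] := eqVneq z x => /=; lia.
Qed.

End NoClosedEvenConn.

End EvenConnections.

Section Colons.
Variables (N : nat) (G : rel 'I_N) (s : nat) (e : 'I_s -> 'I_N * 'I_N).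
Hypotheses (G_sym : ssrbool.symmetric G) (G_irr : irreflexive G).
Hypothesis G_e : forall i, G (e i).1 (e i).2.
Local Notation mon := 'X_{1..N}.
Local Notation edge_prod := (edge_prod G).
Local Notation eexp := (eexp e).
Local Notation even_pair := (even_pair G e).
Local Notation even_conn := (even_conn G e).
Local Open Scope multi_scope.
Implicit Types (i : 'I_s) (w b g : mon).

Lemma colon_edges_colon_powers w (a : 'I_s -> nat) : (forall i, 0 < a i)%N ->
  upclosure (edge_prod s.+1) (w + \sum_(i < s) eexp i) ->
  upclosure (edge_prod (\sum_(i < s) a i).+1) (w + \sum_(i < s) eexp i *+ a i).
Proof.
move=> a_gt0 [b prod_b /mnm_lepP le_b].
exists (b + \sum_(i < s) eexp i *+ (a i).-1).
  have -> : (\sum_(i < s) a i = s + \sum_(i < s) (a i).-1)%N.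
    rewrite -[s in (s + _)%N]card_ord -sum1_card -big_split /=.
    by apply: eq_bigr => i _; rewrite add1n prednK.
  rewrite -addSn; apply: edge_prodD prod_b _; apply: edge_prod_sum => i.
  exact/edge_prodMn/edge_prod_eexp.
have -> : \sum_(i < s) eexp i *+ a i
    = \sum_(i < s) eexp i + \sum_(i < s) eexp i *+ (a i).-1.
  by rewrite -big_split; apply: eq_bigr => i _; rewrite -{1}(prednK (a_gt0 i)) mulmS.
by apply/mnm_lepP => x; move: (le_b x); rewrite !mnmDE; lia.
Qed.

Lemma colon_powers_mdeg_ge2 w (a : 'I_s -> nat) :
  upclosure (edge_prod (\sum_(i < s) a i).+1) (w + \sum_(i < s) eexp i *+ a i) ->
  (2 <= mdeg w)%N.
Proof.
move=> [b /mdeg_edge_prod deg_b /lem_leo/lemc_mdeg].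
rewrite deg_b mdegD mdeg_sum.
under eq_bigr do rewrite mdegMn mdegD !mdeg1.
by rewrite -big_distrr /=; lia.
Qed.

Section SquarefreeColon.
Variable a : 'I_s -> nat.
Hypothesis a_gt0 : forall i, (0 < a i)%N.
Hypothesis colon_squarefree : forall m,
  upclosure (edge_prod (\sum_(i < s) a i).+1) (m + \sum_(i < s) eexp i *+ a i) ->
  exists q : mon, [/\ forall x, (q x <= 1)%N, q <= m &
    upclosure (edge_prod (\sum_(i < s) a i).+1) (q + \sum_(i < s) eexp i *+ a i)].

Lemma no_closed_even_conn_of_squarefree D y : ~ even_conn D y y.
Proof.
move=> conn.
have even_yy : even_pair (U_(y) + U_(y)) by exists y, y, D; rewrite lepm_refl.
have [q [sqf_q /mnm_lepP le_q J_q]] :=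
  colon_squarefree (colon_edges_colon_powers a_gt0 (even_pair_colon G_e even_yy)).
have /lem_leo/lemc_mdeg : q <= U_(y).
  apply/mnm_lepP => x; move: (sqf_q x) (le_q x); rewrite !mnmDE mnm1E; lia.
by rewrite mdeg1; have := colon_powers_mdeg_ge2 J_q; lia.
Qed.

End SquarefreeColon.

Lemma colon_powers_even_pair (a : 'I_s -> nat) w :
  (forall D y, ~ even_conn D y y) ->
  upclosure (edge_prod (\sum_(i < s) a i).+1) (w + \sum_(i < s) eexp i *+ a i) ->
  even_pair w.
Proof.
move=> no_closed [b prod_b le_b].
have [r [size_r Er]] := sum_mulmn_as_seq eexp a (index_enum 'I_s).
by apply: (even_pair_of_edge_prod G_sym G_irr no_closed (r := r) (b := b));
  rewrite ?size_r ?Er.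
Qed.

Section SquareColon.
Variable i0 : 'I_s.

Definition sq_colon g : Prop := upclosure (edge_prod 2) (g + eexp i0).

Lemma edge_prod_sq_colon n b : edge_prod n b -> mpow sq_colon n b.
Proof.
elim: n b => [//|n IHn] b [c [b' [edge_c /IHn pow_b' ->]]].
exists c, b'; split=> //; exists (c + eexp i0); rewrite ?lepm_refl //.
apply: (edge_prodD (n1 := 1) (n2 := 1)); last exact: edge_prod_eexp.
by exists c, 0; rewrite addm0.
Qed.

(* With e_i0 = {c, d}: unless b contains both an edge {c, c'} and another
   edge {d, d'}, one edge of b can be dropped; if it does, the pair is
   replaced by x_c' x_d', which lies in I^2 : e_i0 because
   x_c x_c' * x_d x_d' = x_c x_d * x_c' x_d'. *)
Lemma mpow_sq_colon_of_edge_prod_le n x b : edge_prod n.+1 b -> b <= x + eexp i0 ->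
  upclosure (mpow sq_colon n) x.
Proof.
set c := (e i0).1; set d := (e i0).2 => prod_b /mnm_lepP le_b.
have cd : c != d by apply: contraTneq (G_e i0) => cd; rewrite -/c -/d cd G_irr.
have from_edges b' : edge_prod n b' -> b' <= x -> upclosure (mpow sq_colon n) x.
  by move=> /edge_prod_sq_colon; exists b'.
have [bc0|/(edge_prod_at G_sym prod_b) [c' [b1 [Gcc' prod_b1 Eb]]]] := posnP (b c).
  suff /(edge_prod_drop G_sym prod_b) [b' prod_b' le_b'] : b <= x + U_(d).
    exact: from_edges le_b'.
  apply/mnm_lepP => z; move: (le_b z); rewrite /eexp /edge_exp !mnmDE !mnm1E -/c -/d.
  by have [<-|cz] := eqVneq c z; rewrite ?bc0 ?(negbTE cz) /=; lia.
have le_b1 z : (b1 z + (c' == z) <= x z + (d == z))%N.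
  by move: (le_b z); rewrite Eb /eexp /edge_exp !mnmDE !mnm1E -/c -/d; lia.
have [c'd|c'd] := eqVneq c' d.
  by apply: (from_edges b1) => //; apply/mnm_lepP => z; move: (le_b1 z); rewrite c'd; lia.
have [b1d0|b1d] := posnP (b1 d).
  apply: (from_edges b1) => //; apply/mnm_lepP => z; move: (le_b1 z).
  by have [<-|dz] := eqVneq d z; rewrite ?b1d0 ?(negbTE dz) /=; lia.
case: n prod_b1 {from_edges prod_b} => [|n] prod_b1.
  by move: b1d; rewrite (edge_prod0 prod_b1) mnm0E.
have [d' [b2 [Gdd' prod_b2 Eb1]]] := edge_prod_at G_sym prod_b1 b1d.
exists (U_(c') + U_(d') + b2).
  exists (U_(c') + U_(d')), b2; split=> //; last exact: edge_prod_sq_colon.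
  exists (edge_exp c c' + edge_exp d d'); last first.
    by apply/mnm_lepP => z; rewrite /eexp /edge_exp !mnmDE -/c -/d; lia.
  exact: (edge_prodD (n1 := 1) (n2 := 1)) (edge_prod1 Gcc') (edge_prod1 Gdd').
apply/mnm_lepP => z; move: (le_b1 z); rewrite Eb1 /edge_exp !mnmDE !mnm1E.
lia.
Qed.

Lemma mpow_sq_colon_edge_prod n g : mpow sq_colon n g ->
  exists2 b, edge_prod (n + n) b & b <= g + eexp i0 *+ n.
Proof.
elim: n g => [|n IHn] g; first by move=> ->; exists 0; rewrite ?lem_addr.
move=> [g1 [g2 [[b1 prod_b1 /mnm_lepP le_b1] /IHn [b2 prod_b2 /mnm_lepP le_b2] ->]]].
exists (b1 + b2); first by rewrite addSn addnS; apply: (edge_prodD (n1 := 2)).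
by apply/mnm_lepP => z; move: (le_b1 z) (le_b2 z); rewrite mulmS !mnmDE; lia.
Qed.

Lemma colon_edges_colon_sq_colon w :
  upclosure (edge_prod s.+1) (w + \sum_(i < s) eexp i) ->
  upclosure (mpow sq_colon s) (w + \sum_(i < s | i != i0) eexp i).
Proof.
move=> [b prod_b le_b]; apply: (mpow_sq_colon_of_edge_prod_le prod_b).
by rewrite (bigD1 i0) //= [eexp i0 + _]addmC addmA in le_b.
Qed.

Lemma colon_sq_colon_even_pair w : (0 < s)%N -> (forall D y, ~ even_conn D y y) ->
  upclosure (mpow sq_colon s) (w + \sum_(i < s | i != i0) eexp i) -> even_pair w.
Proof.
move=> s_gt0 no_closed [g /mpow_sq_colon_edge_prod [b prod_b /mnm_lepP le_b]].
move/mnm_lepP=> le_g.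
pose r := nseq s.-1 i0 ++ index_enum 'I_s.
apply: (even_pair_of_edge_prod G_sym G_irr no_closed (r := r) (b := b)).
  rewrite size_cat size_nseq -[size _]sum1_size sum1_card card_ord.
  by rewrite -addSn prednK.
rewrite big_cat sum_nseq_mnm /= (bigD1 i0) //=.
set E' := \sum_(i < s | i != i0) eexp i in le_g *.
apply/mnm_lepP => z; move: (le_b z) (le_g z).
rewrite -[X in eexp i0 *+ X](prednK s_gt0) mulmS !mnmDE; lia.
Qed.

End SquareColon.

End Colons.

Section EdgeIdealColons.
Variables (N : nat) (k : fieldType) (G : rel 'I_N).
Local Notation I := (edge_ideal (k := k) G).

Lemma edge_monE (x : 'I_N * 'I_N) : edge_mon k x = 'X_[edge_exp x.1 x.2].
Proof. by rewrite /edge_mon /edge_exp mpolyXD. Qed.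

Lemma edge_idealE : ideal_eq I (monomial_ideal (k := k) (edge_exps G)).
Proof.
apply: eq_ideal_gen => p; split=> [[x [y [Gxy ->]]]|[_ [x [y [Gxy ->]]] ->]].
  by exists (edge_exp x y); [exists x, y | rewrite /edge_exp mpolyXD].
by exists x, y; rewrite /edge_exp mpolyXD.
Qed.

Lemma edge_ideal_pow_colonE n f :
  ideal_eq (ideal_colon (ideal_pow I n) 'X_[f])
           (supported_in (k := k) (fun m => upclosure (edge_prod G n) (m + f)%MM)).
Proof.
apply: ideal_eq_trans (supported_in_colonX _ _); apply: eq_ideal_colon.
apply: ideal_eq_trans (eq_ideal_pow _ edge_idealE) _.
exact: ideal_eq_trans (monomial_ideal_pow _ _) (monomial_idealE _).
Qed.

Lemma sq_colon_pow_colonE s (e : 'I_s -> 'I_N * 'I_N) i0 f :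
  ideal_eq
    (ideal_colon (ideal_pow (ideal_colon (ideal_pow I 2) 'X_[eexp e i0]) s) 'X_[f])
    (supported_in (k := k)
       (fun m => upclosure (mpow (sq_colon G e i0) s) (m + f)%MM)).
Proof.
apply: ideal_eq_trans (supported_in_colonX _ _); apply: eq_ideal_colon.
have sq_colonE : ideal_eq (ideal_colon (ideal_pow I 2) 'X_[eexp e i0])
                          (monomial_ideal (k := k) (sq_colon G e i0)).
  apply: ideal_eq_trans (edge_ideal_pow_colonE _ _) (upclosed_monomial_idealE _).
  move=> m m' [b prod_b /mnm_lepP le_b] /mnm_lepP le_m; exists b => //.
  by apply/mnm_lepP => x; move: (le_b x) (le_m x); rewrite !mnmDE; lia.
apply: ideal_eq_trans (eq_ideal_pow _ sq_colonE) _.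
exact: ideal_eq_trans (monomial_ideal_pow _ _) (monomial_idealE _).
Qed.

End EdgeIdealColons.

Theorem lemma3p3 (k : fieldType) (N : nat) (G : rel 'I_N)
  (s : nat) (hs : (0 < s)%N) (e : 'I_s -> 'I_N * 'I_N) (a : 'I_s -> nat) :
  simple_graph G ->
  (forall i, G (e i).1 (e i).2) ->
  (forall i j, i != j -> [set (e i).1; (e i).2] != [set (e j).1; (e j).2]) ->
  (forall i, (0 < a i)%N) ->
  let t := (\sum_(i < s) a i).+1 in
  let xe : {mpoly k[N]} := \prod_(i < s) edge_mon k (e i) ^+ a i in
  let I : {mpoly k[N]} -> Prop := edge_ideal G in
  squarefree_monomial_ideal (ideal_colon (ideal_pow I t) xe) ->
  ideal_eq (ideal_colon (ideal_pow I t) xe)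
           (ideal_colon (ideal_pow I s.+1) (\prod_(i < s) edge_mon k (e i)))
  /\
  ideal_eq (ideal_colon (ideal_pow I s.+1) (\prod_(i < s) edge_mon k (e i)))
           (ideal_colon
              (ideal_pow (ideal_colon (ideal_pow I 2) (edge_mon k (e (Ordinal hs)))) s)
              (\prod_(i < s | (0 < i)%N) edge_mon k (e i))).
Proof.
(* The edges e_i need not be distinct. *)
move=> [G_sym G_irr] G_e _ a_gt0 t xe I; set i0 := Ordinal hs.
have -> : xe = 'X_[\sum_(i < s) eexp e i *+ a i].
  by rewrite -mprodXnE; apply: eq_bigr => i _; rewrite edge_monE.
move=> sqf_J.
have prodE (P : pred 'I_s) :
    \prod_(i < s | P i) edge_mon k (e i) = 'X_[\sum_(i < s | P i) eexp e i].
  by rewrite -mprodXE; apply: eq_bigr => i _; rewrite edge_monE.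
have -> : \prod_(i < s | (0 < i)%N) edge_mon k (e i)
          = 'X_[\sum_(i < s | i != i0) eexp e i].
  by rewrite prodE; congr 'X_[_]; apply: eq_bigl => i; rewrite lt0n.
rewrite prodE edge_monE.
have J := edge_ideal_pow_colonE (k := k) G t (\sum_(i < s) eexp e i *+ a i).
have K := edge_ideal_pow_colonE (k := k) G s.+1 (\sum_(i < s) eexp e i).
have L := sq_colon_pow_colonE (k := k) G e i0 (\sum_(i < s | i != i0) eexp e i).
have no_closed := no_closed_even_conn_of_squarefree G_e a_gt0
  (squarefree_monomial_ideal_below J sqf_J).
split.
  apply: ideal_eq_trans J (ideal_eq_trans _ (ideal_eq_sym K)).
  apply: eq_supported_in => m; split; last exact: colon_edges_colon_powers.
  by move/(colon_powers_even_pair G_sym G_irr no_closed)/(even_pair_colon G_e).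
apply: ideal_eq_trans K (ideal_eq_trans _ (ideal_eq_sym L)).
apply: eq_supported_in => m; split; first exact: colon_edges_colon_sq_colon.
by move/(colon_sq_colon_even_pair G_sym G_irr hs no_closed)/(even_pair_colon G_e).
Qed.
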